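(* Let $n\ge 2$. There exists a bijection from $T_n$ to $P_n$, where $T_n$ is the set of labeled threshold graphs on the vertex set $\{1,\dots,n\}$ and $P_n=\{(\pi,A):\pi\in\mathcal{S}_n^+,\ A\subseteq\mathrm{Asc}(\pi)\}$.
   Context: A threshold graph is a graph obtainable from the empty graph by repeatedly adding a new vertex that is either adjacent to all existing vertices or to none; labeled threshold graphs on $n$ vertices have vertex set $\{1,\dots,n\}$ and are distinguished by their edge sets. $\mathcal{S}_n$ is the set of permutations of $\{1,\dots,n\}$ in one-line notation $\pi=\pi_1\cdots\pi_n$. A position $i$ with $1\le i\le n-1$ is an ascent of $\pi$ if $\pi_i<\pi_{i+1}$, and $\mathrm{Asc}(\pi)$ is the set of ascents of $\pi$. For $n\ge 2$, $\mathcal{S}_n^+$ is the set of $\pi\in\mathcal{S}_n$ with $\pi_1<\pi_2$. *)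

(* Vertices/positions {1,...,n} are encoded 0-based as 'I_n. *)
From mathcomp Require Import all_boot all_order all_fingroup.
Set Implicit Arguments.
Unset Strict Implicit.
Unset Printing Implicit Defensive.

Definition simple_graph (n : nat) (E : {set {set 'I_n}}) : Prop :=
  forall e, e \in E -> #|e| = 2.

(* Threshold graph: built from the empty graph by adding vertices
   sigma 0, sigma 1, ..., sigma (n-1) in order; when sigma j is added it is
   adjacent to all previously added vertices if d j, and to none otherwise. *)
Definition threshold (n : nat) (E : {set {set 'I_n}}) : Prop :=
  exists (sigma : 'S_n) (d : 'I_n -> bool),
    E = [set [set sigma p.1; sigma p.2] | p : 'I_n * 'I_n & (p.1 < p.2) && d p.2].

Definition threshold_graph (n : nat) : Type :=
  {E : {set {set 'I_n}} | simple_graph E /\ threshold E}.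

(* 0-based position i (i.e. 1-based position i+1) is an ascent of pi if
   i+1 < n and pi_i < pi_{i+1}. *)
Definition is_ascent (n : nat) (pi : 'S_n) (i : 'I_n) : bool :=
  [exists j : 'I_n, (val j == i.+1) && (pi i < pi j)].

Definition Asc (n : nat) (pi : 'S_n) : {set 'I_n} := [set i | is_ascent pi i].

Definition Splus (n : nat) (pi : 'S_n) : Prop :=
  exists i j : 'I_n, val i = 0 /\ val j = 1 /\ pi i < pi j.

Definition Pn (n : nat) : Type :=
  {p : 'S_n * {set 'I_n} | Splus p.1 /\ p.2 \subset Asc p.1}.

From mathcomp Require Import all_boot all_order all_fingroup.
From mathcomp Require Import zify.
From Stdlib Require Import ProofIrrelevance IndefiniteDescription.
Set Implicit Arguments.
Unset Strict Implicit.
Unset Printing Implicit Defensive.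

(* A threshold graph is encoded by an insertion order s and types d (the
   vertex inserted at step k is joined to all earlier ones iff d k).  The type
   of the first vertex is irrelevant, and swapping two consecutive insertions
   of equal type does not change the graph.  Call (s, d) normal when
   d 0 = d 1 and s increases along every run of equal types.  Every threshold
   graph has a normal representation: one maximising sum_k k * s k.  It has
   only one: if two normal representations agree after step k, the vertex s' k
   is joined to all or to none of the other vertices inserted up to step k, so
   in s it ends a run at k and s' k <= s k; symmetrically s k <= s' k.
   Finally normal pairs (s, d) are the pairs (pi, A) of P_n in disguise:
   pi = s, 0 \in A records the type of the first run, and i \in A for i > 0
   records that steps i and i+1 have the same type, so that s 0 < s 1 and
   A \subset Asc s together say exactly that (s, d) is normal. *)

Lemma inj_surj_bijective (A B : Type) (g : B -> A) :
  injective g -> (forall a, exists b, g b = a) -> exists f : A -> B, bijective f.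
Proof.
move=> g_inj g_surj; pose f a := proj1_sig (constructive_indefinite_description _ (g_surj a)).
have fK : cancel f g by move=> a; rewrite /f; case: constructive_indefinite_description.
by exists f, g => // b; apply: g_inj; rewrite fK.
Qed.

Section ThresholdEdges.
Variable n : nat.
Implicit Types (s : 'S_n) (d : 'I_n -> bool) (a b i j k p q : 'I_n).

Lemma ord_up_ind (P : 'I_n -> Prop) :
  (forall k, (forall q, q < k -> P q) -> P k) -> forall k, P k.
Proof.
move=> IH k; have [t] := ubnP k; elim: t k => // t IHt k ltkt.
by apply: IH => q ltqk; apply: IHt; lia.
Qed.

Lemma ord_down_ind (P : 'I_n -> Prop) :
  (forall k, (forall q, k < q -> P q) -> P k) -> forall k, P k.
Proof.
move=> IH k; have [t] := ubnP (n - k); elim: t k => // t IHt k ltkt.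
by apply: IH => q ltkq; apply: IHt; have := ltn_ord q; lia.
Qed.

Definition threshold_edges s d : {set {set 'I_n}} :=
  [set [set s p.1; s p.2] | p : 'I_n * 'I_n & (p.1 < p.2) && d p.2].

Lemma threshold_edgesP s d a b : a < b -> ([set s a; s b] \in threshold_edges s d) = d b.
Proof.
move=> ltab; apply/imsetP/idP => [[[p1 p2]]|dp]; last first.
  by exists (a, b); rewrite // inE /= ltab.
rewrite inE /= => /andP[lt12 dp2] eq12.
have : s a \in [set s p1; s p2] by rewrite -eq12 !inE eqxx.
have : s b \in [set s p1; s p2] by rewrite -eq12 !inE eqxx orbT.
rewrite !inE !(inj_eq perm_inj).
case/orP=> /eqP eb; case/orP=> /eqP ea; subst; rewrite ?ltnn // in ltab.
by rewrite ltnNge ltnW in ltab.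
Qed.

Lemma threshold_edges_sym s d a b : a < b -> ([set s b; s a] \in threshold_edges s d) = d b.
Proof. by rewrite setUC; apply: threshold_edgesP. Qed.

Lemma threshold_edges_threshold s d : threshold (threshold_edges s d).
Proof. by exists s, d. Qed.

Lemma threshold_edges_simple s d : simple_graph (threshold_edges s d).
Proof.
move=> _ /imsetP[p /[!inE] /andP[lt12 _] ->].
by rewrite cards2 (inj_eq perm_inj) neq_ltn lt12.
Qed.

Lemma eq_threshold_edges s d d' :
  (forall k, 0 < k -> d k = d' k) -> threshold_edges s d = threshold_edges s d'.
Proof.
move=> dd'; apply/setP => e.
by apply/imsetP/imsetP => -[p /[!inE] /andP[lt12 dp] ->]; exists p; rewrite // inE lt12 /=;
  rewrite (dd', =^~ dd') //; apply: leq_ltn_trans lt12.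
Qed.

Lemma tperm_succ_lt i j a b :
  j = i.+1 :> nat -> a < b -> (a, b) != (i, j) -> tperm i j a < tperm i j b.
Proof.
move=> hj ltab; rewrite xpair_eqE -!val_eqE /= hj.
case: tpermP => [?|?|/eqP+ /eqP+]; case: tpermP => [?|?|/eqP+ /eqP+]; subst;
  by move: ltab; rewrite -?val_eqE /= ?hj; lia.
Qed.

Lemma threshold_edges_swap_sub s d i j : j = i.+1 :> nat -> d i = d j ->
  threshold_edges (tperm i j * s) d \subset threshold_edges s d.
Proof.
move=> hj dij; apply/subsetP => _ /imsetP[[a b] /[!inE] /andP[/= ltab db] ->].
rewrite !permM; case: (eqVneq (a, b) (i, j)) => [[ea eb]|neq].
  by subst; rewrite tpermL tpermR threshold_edges_sym // hj.
rewrite threshold_edgesP ?tperm_succ_lt //.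
by case: tpermP db => [->|->|] //; rewrite dij.
Qed.

Lemma threshold_edges_swap s d i j : j = i.+1 :> nat -> d i = d j ->
  threshold_edges (tperm i j * s) d = threshold_edges s d.
Proof.
move=> hj dij; apply/eqP; rewrite eqEsubset threshold_edges_swap_sub //=.
by rewrite -{1}[s]mul1g -(tperm2 i j) -mulgA threshold_edges_swap_sub.
Qed.

Definition weight s := \sum_(x : 'I_n) x * s x.

Lemma weight_swap_descent s i j : j = i.+1 :> nat -> s j < s i ->
  weight s < weight (tperm i j * s).
Proof.
move=> hj lt.
have nji : j != i by rewrite -val_eqE /= hj neq_ltn ltnSn orbT.
set R := \sum_(x | (x != i) && (x != j)) x * s x.
have -> : weight s = i * s i + (j * s j + R) by rewrite /weight (bigD1 i) //= (bigD1 j).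
have -> : weight (tperm i j * s) = i * s j + (j * s i + R).
  rewrite /weight (bigD1 i) //= (bigD1 j) //= !permM tpermL tpermR.
  congr (_ + (_ + _)); apply: eq_bigr => x /andP[xi xj].
  by rewrite permM tpermD // eq_sym.
rewrite hj; nia.
Qed.

Definition agree_above s s' k := forall q, k < q -> s q = s' q.

Lemma agree_above_sym s s' k : agree_above s s' k -> agree_above s' s k.
Proof. by move=> ss' q /ss'. Qed.

Lemma agree_above_prefix s s' k p : agree_above s s' k -> p <= k ->
  exists2 p' : 'I_n, p' <= k & s p = s' p'.
Proof.
move=> ss' lepk; exists ((s'^-1)%g (s p)); last by rewrite permKV.
rewrite leqNgt; apply/negP => /[dup] lt /ss'; rewrite permKV => /perm_inj eq_p.
by move: lt; rewrite eq_p ltnNge lepk.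
Qed.

End ThresholdEdges.

Section NormalForm.
Variable n : nat.
Local Notation m := n.+2.
Local Notation ord1 := (inord 1 : 'I_m).
Implicit Types (s pi : 'S_m) (d : 'I_m -> bool) (i j k p r : 'I_m) (A : {set 'I_m}).

Lemma val_ord1 : ord1 = 1 :> nat.
Proof. exact: inordK. Qed.

(* [threshold_edges] never reads [d ord0]; tying it to [d ord1] makes the
   normal representation unique. *)
Definition normal_form s d : Prop :=
  d ord0 = d ord1 /\ forall i j, j = i.+1 :> nat -> d i = d j -> s i < s j.

Lemma normal_form_run s d p k : normal_form s d -> p < k ->
  (forall r, p <= r <= k -> d r = d k) -> s p < s k.
Proof.
move=> [_ nf_asc] ltpk d_run.
pose D := [pred r : nat | p <= r <= k].
have mono : {in D &, {homo (fun x : nat => s (inord x) : nat) : x y / x < y}}.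
  apply: homo_ltn_in => [y x z|x y Dx Dy z|x Dx Dx1] /=.
  - exact: ltn_trans.
  - move: Dx Dy; rewrite /D !inE => /andP[px _] /andP[_ yk] /andP[xz zy].
    by rewrite (leq_trans px (ltnW xz)) (leq_trans (ltnW zy) yk).
  - move: Dx Dx1; rewrite /D !inE => Dx Dx1.
    have lt_xm : x.+1 < m by apply: leq_ltn_trans (ltn_ord k); case/andP: Dx1.
    apply: nf_asc; first by rewrite !inordK // ltnW.
    by rewrite !d_run // !inordK // ltnW.
by have := mono p k; rewrite !inord_val /D !inE !leqnn (ltnW ltpk); apply.
Qed.

Lemma normal_form_uniform_lt s d b p k : normal_form s d -> p < k ->
  (forall r, r <= k -> r != p -> ([set s p; s r] \in threshold_edges s d) = b) -> s p < s k.
Proof.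
move=> nf ltpk adj_p.
have d_after r : p < r <= k -> d r = b.
  by case/andP=> ltpr lerk; rewrite -(threshold_edgesP s d ltpr) adj_p // -val_eqE /= gtn_eqF.
have d_p : d p = b.
  have [p0|p_pos] := posnP p.
    have -> : p = ord0 by apply: val_inj.
    by case: nf => -> _; rewrite d_after // val_ord1 -p0 leqnn; apply: leq_trans ltpk.
  by rewrite -(threshold_edges_sym s d (p_pos : ord0 < p)) adj_p // eq_sym -val_eqE /= -lt0n.
apply: (normal_form_run nf ltpk) => r /andP[lepr lerk].
rewrite (d_after k) ?ltpk ?leqnn //.
have [ltpr|lerp] := ltnP p r; first by rewrite d_after ?ltpr.
by rewrite (_ : r = p) //; apply/val_inj/eqP; rewrite eqn_leq lerp lepr.
Qed.

Lemma normal_form_agree_lt s s' d d' k p : normal_form s d ->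
  threshold_edges s d = threshold_edges s' d' -> agree_above s s' k ->
  p < k -> s' k = s p -> s p < s k.
Proof.
move=> nf E_eq above ltpk esp.
(* In the graph read through (s', d'), the vertex s' k is joined to all or to
   none of the other vertices inserted up to step k, according to d' k. *)
apply: (normal_form_uniform_lt (b := d' k) nf ltpk) => r lerk nerp.
have [r' ler'k esr] := agree_above_prefix above lerk.
have ltr'k : r' < k.
  move: ler'k; rewrite leq_eqVlt => /predU1P[/val_inj er'k|//].
  have srp : s r = s p by rewrite esr er'k esp.
  by rewrite (perm_inj srp) eqxx in nerp.
by rewrite -esp esr E_eq threshold_edges_sym.
Qed.

Lemma normal_form_perm_unique s s' d d' : normal_form s d -> normal_form s' d' ->
  threshold_edges s d = threshold_edges s' d' -> s = s'.
Proof.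
move=> nf nf' E_eq; apply/permP; elim/ord_down_ind => k above.
have [p lepk esp] := agree_above_prefix (agree_above_sym above) (leqnn k).
have [p' lep'k esp'] := agree_above_prefix above (leqnn k).
move: lepk; rewrite leq_eqVlt => /predU1P[/val_inj epk|ltpk]; first by rewrite esp epk.
move: lep'k; rewrite leq_eqVlt => /predU1P[/val_inj ep'k|ltp'k]; first by rewrite esp' ep'k.
have := normal_form_agree_lt nf E_eq above ltpk esp.
have := normal_form_agree_lt nf' (esym E_eq) (agree_above_sym above) ltp'k esp'.
by rewrite -esp -esp' => lt /(ltn_trans lt); rewrite ltnn.
Qed.

Lemma threshold_edges_types_inj s d d' k : threshold_edges s d = threshold_edges s d' ->
  0 < k -> d k = d' k.
Proof.
by move=> E_eq k_pos; rewrite -(threshold_edgesP s d (k_pos : ord0 < k)) E_eq threshold_edgesP.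
Qed.

Lemma normal_form_unique s s' d d' : normal_form s d -> normal_form s' d' ->
  threshold_edges s d = threshold_edges s' d' -> s = s' /\ d =1 d'.
Proof.
move=> nf nf' E_eq; have ss' := normal_form_perm_unique nf nf' E_eq.
rewrite -ss' in E_eq; have d_pos := threshold_edges_types_inj E_eq.
split=> // k; have [k0|k_pos] := posnP k; last exact: d_pos.
have -> : k = ord0 by apply: val_inj.
by case: nf nf' => -> _ [-> _]; rewrite d_pos // val_ord1.
Qed.

Lemma normal_form_exists s0 d0 :
  exists s d, normal_form s d /\ threshold_edges s d = threshold_edges s0 d0.
Proof.
pose d i := if i == ord0 then d0 ord1 else d0 i.
have E_d : threshold_edges s0 d = threshold_edges s0 d0.
  by apply: eq_threshold_edges => k k_pos; rewrite /d -val_eqE /= eqn0Ngt k_pos.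
pose P s := threshold_edges s d == threshold_edges s0 d0.
(* In a weight-maximal representative no adjacent same-type descent is left:
   swapping it would keep the graph and increase the weight. *)
have [s /eqP E_s max_s] := @arg_maxnP _ s0 P (@weight m) (introT eqP E_d).
exists s, d; split=> //; split; first by rewrite /d eqxx -val_eqE /= val_ord1.
move=> i j hj dij; rewrite ltnNge; apply/negP => le_sj_si.
have lt_sj_si : s j < s i.
  by rewrite ltn_neqAle le_sj_si val_eqE (inj_eq perm_inj) -val_eqE /= hj neq_ltn ltnSn orbT.
have := max_s (tperm i j * s)%g; rewrite /P threshold_edges_swap // E_s eqxx => /(_ isT).
by rewrite /geq /= leqNgt weight_swap_descent.
Qed.

Lemma SplusP pi : Splus pi <-> pi ord0 < pi ord1.
Proof.
split=> [[i [j [i0 [j1 lt_ij]]]]|lt01]; last by exists ord0, ord1; rewrite /= val_ord1.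
have -> : ord0 = i by apply: val_inj.
by have -> : ord1 = j by apply: val_inj; rewrite /= val_ord1.
Qed.

Lemma AscE pi i j : j = i.+1 :> nat -> (i \in Asc pi) = (pi i < pi j).
Proof.
move=> hj; rewrite inE; apply/existsP/idP => [[j' /andP[/eqP hj' lt_ij']]|lt_ij].
  by rewrite (_ : j = j') //; apply: val_inj; rewrite hj'.
by exists j; rewrite lt_ij andbT; apply/eqP.
Qed.

Lemma ord_max_notin_sub_Asc pi A : A \subset Asc pi -> ord_max \notin A.
Proof.
move=> A_asc; apply: contra (subsetP A_asc ord_max) _.
by rewrite inE; apply/existsP => -[j /andP[/eqP hj _]]; move: (ltn_ord j); rewrite hj ltnn.
Qed.

Fixpoint run_types (a : nat -> bool) (i : nat) : bool :=
  if i is k.+1 then (if k is 0 then a 0 else run_types a k == a k) else a 0.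

(* [ord0 \in A] is the type of the first run; for [0 < i], [i \in A] says that
   steps [i] and [i.+1] have the same type. *)
Definition types_of A i := run_types (fun x : nat => x \in [seq val y | y in A]) i.

Lemma types_of_ord0 A : types_of A ord0 = (ord0 \in A).
Proof. by rewrite /types_of /= -[0]/(val (ord0 : 'I_m)) (mem_image val_inj). Qed.

Lemma types_of_ord1 A : types_of A ord1 = (ord0 \in A).
Proof. by rewrite /types_of val_ord1 /= -[0]/(val (ord0 : 'I_m)) (mem_image val_inj). Qed.

Lemma types_of_succ A i j : 0 < i -> j = i.+1 :> nat ->
  types_of A j = (types_of A i == (i \in A)).
Proof.
by move=> i_pos hj; rewrite /types_of hj /= (mem_image val_inj); case: (nat_of_ord i) i_pos.
Qed.

Lemma normal_form_types_of pi A : Splus pi -> A \subset Asc pi ->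
  normal_form pi (types_of A).
Proof.
move=> /SplusP lt01 A_asc; split=> [|i j hj]; first by rewrite types_of_ord0 types_of_ord1.
have [i0|i_pos] := posnP i.
  have -> : i = ord0 by apply: val_inj.
  by have -> : j = ord1 by apply: val_inj; rewrite /= val_ord1 hj i0.
rewrite (types_of_succ A i_pos hj) -(AscE pi hj) => same_type.
by apply: (subsetP A_asc); move: same_type; case: (types_of A i); case: (i \in A).
Qed.

Lemma types_of_inj A A' : ord_max \notin A -> ord_max \notin A' ->
  types_of A =1 types_of A' -> A = A'.
Proof.
move=> A_max A'_max eq_types; apply/setP => i.
have [i0|i_pos] := posnP i.
  have -> : i = ord0 by apply: val_inj.
  by rewrite -types_of_ord0 eq_types types_of_ord0.
have [ltim|leim] := ltnP i.+1 m.
  have hj : (inord i.+1 : 'I_m) = i.+1 :> nat by exact: inordK.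
  have := eq_types (inord i.+1).
  rewrite (types_of_succ A i_pos hj) (types_of_succ A' i_pos hj) eq_types.
  by case: (i \in A); case: (i \in A'); case: (types_of A' i).
have -> : i = ord_max by apply: val_inj; apply/eqP; rewrite eqn_leq -ltnS ltn_ord.
by rewrite (negbTE A_max) (negbTE A'_max).
Qed.

Lemma types_of_normal_form s d : normal_form s d ->
  exists A, [/\ Splus s, A \subset Asc s & types_of A =1 d].
Proof.
case=> d01 nf_asc.
pose A := [set i : 'I_m | (i.+1 < m) && (if i == ord0 then d i else d i == d (inord i.+1))].
have A0 : (ord0 \in A) = d ord0 by rewrite inE eqxx.
exists A; split.
- by apply/SplusP; apply: nf_asc; rewrite ?val_ord1.
- apply/subsetP => i; rewrite inE => /andP[ltim same_type].
  have hj : (inord i.+1 : 'I_m) = i.+1 :> nat by exact: inordK.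
  rewrite (AscE s hj); apply: nf_asc => //.
  by case: eqP same_type => [-> _|_ /eqP].
- elim/ord_up_ind => k IH; have [k0|k_pos] := posnP k.
    have -> : k = ord0 by apply: val_inj.
    by rewrite types_of_ord0.
  have [k1|k_neq1] := eqVneq (k : nat) 1.
    have -> : k = ord1 by apply: val_inj; rewrite /= val_ord1.
    by rewrite types_of_ord1 A0.
  have [i hk] : exists i : 'I_m, k = i.+1 :> nat.
    by exists (inord k.-1); rewrite inordK ?prednK // ltnW.
  have i_pos : 0 < i by rewrite lt0n; apply: contraNneq k_neq1; rewrite hk => ->.
  rewrite (types_of_succ A i_pos hk) IH ?hk // inE -hk ltn_ord inord_val.
  by rewrite -val_eqE /= eqn0Ngt i_pos; case: (d i); case: (d k).
Qed.

Definition graph_of (P : Pn m) : threshold_graph m :=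
  exist _ (threshold_edges (sval P).1 (types_of (sval P).2))
    (conj (@threshold_edges_simple _ _ _) (@threshold_edges_threshold _ _ _)).

Lemma graph_of_inj : injective graph_of.
Proof.
move=> [[pi A] /= [pi_plus A_asc]] [[pi' A'] /= [pi'_plus A'_asc]] /(congr1 sval) /= E_eq.
apply: subset_eq_compat.
have [/= -> eq_types] := normal_form_unique (normal_form_types_of pi_plus A_asc)
  (normal_form_types_of pi'_plus A'_asc) E_eq.
by rewrite (types_of_inj (ord_max_notin_sub_Asc A_asc) (ord_max_notin_sub_Asc A'_asc)).
Qed.

Lemma graph_of_surj G : exists P, graph_of P = G.
Proof.
case: G => E [E_simple [s0 [d0 E_def]]]; subst E.
have [s [d [nf E_eq]]] := normal_form_exists s0 d0.
have [A [s_plus A_asc eq_types]] := types_of_normal_form nf.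
exists (exist _ (s, A) (conj s_plus A_asc)); apply: subset_eq_compat => /=.
by rewrite -[RHS]/(threshold_edges s0 d0) -E_eq; apply: eq_threshold_edges => k _.
Qed.

End NormalForm.

Theorem proposition5 (n : nat) (hn : 2 <= n) :
  exists f : threshold_graph n -> Pn n, bijective f.
Proof.
case: n hn => [|[|n]] // _.
exact: inj_surj_bijective (@graph_of_inj n) (@graph_of_surj n).
Qed.
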